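(* Let $(A,\mathcal{R})$ and $(B,\mathcal{S})$ be objects of $\mathbf{T}$ and let $f:(A,\mathcal{R})\to(B,\mathcal{S})$ be a $\mathbf{T}$-morphism. Then $\Psi f=f\sqcup \mathrm{id}_V:(\overline{A},\overline{\mathcal{R}})\to(\overline{B},\overline{\mathcal{S}})$ is a $\mathbf{T}$-morphism, where $(\overline{A},\overline{\mathcal{R}})=\Psi(A,\mathcal{R})$ and $(\overline{B},\overline{\mathcal{S}})=\Psi(B,\mathcal{S})$.
   Context: $\mathbf{T}$ is the category whose objects are pairs $(A,\mathcal{R})$ with $A$ a set and $\mathcal{R}$ an arbitrary family of subsets of $A$, and whose morphisms $f:(A,\mathcal{R})\to(B,\mathcal{S})$ are maps $f:A\to B$ with $f^{-1}[S]\in\mathcal{R}$ for all $S\in\mathcal{S}$. Fix a finite simple graph (symmetric, loopless) with vertex set $V=\{v_1,\dots,v_6\}$ and edge set $\mathcal{G}$ (a family of two-element subsets of $V$) having no non-identity automorphism. For a $\mathbf{T}$-object $(A,\mathcal{R})$ define $\Psi(A,\mathcal{R})=(\overline{A},\overline{\mathcal{R}})$ where $\overline{A}=A\sqcup V$ (disjoint union) and $\overline{\mathcal{R}}$ consists of the sets $\{v_i\}$ and $\overline{A}\setminus\{v_i\}$ for $i\in\{1,\dots,6\}$; the sets $G$ and $\overline{A}\setminus G$ for $G\in\mathcal{G}$; and the sets $\{v_1,v_2,v_3\}\cup R$ and $\{v_4,v_5,v_6\}\cup(A\setminus R)$ for $R\in\mathcal{R}$. For a map $f:A\to B$ put $\Psi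 f=f\sqcup\mathrm{id}_V:\overline{A}\to\overline{B}$. *)

From mathcomp Require Import all_boot all_fingroup.
Set Implicit Arguments. Unset Strict Implicit. Unset Printing Implicit Defensive.

(* Objects of T: a type A with a family of subsets R : (A -> Prop) -> Prop. *)
Definition Tfam (A : Type) := (A -> Prop) -> Prop.

Definition Tmor (A B : Type) (R : Tfam A) (S : Tfam B) (f : A -> B) : Prop :=
  forall Y : B -> Prop, S Y -> R (fun a => Y (f a)).

(* Vertex set V = {v_1,...,v_6} is 'I_6 (v_i = ordinal i-1). *)
Definition V := 'I_6.

Definition simple_graph (adj : rel V) : Prop :=
  (forall x y, adj x y = adj y x) /\ (forall x, adj x x = false).

Definition rigid (adj : rel V) : Prop :=
  forall p : {perm V}, (forall x y, adj (p x) (p y) = adj x y) -> p = 1%g.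

Definition is_edge (adj : rel V) (G : V -> Prop) : Prop :=
  exists x y, adj x y /\ (forall v, G v <-> (v = x \/ v = y)).

Definition ext_eq (X : Type) (P Q : X -> Prop) : Prop := forall z, P z <-> Q z.

Definition vin (z : V) (i j k : nat) : Prop :=
  nat_of_ord z = i \/ nat_of_ord z = j \/ nat_of_ord z = k.

(* Psi(A,R) = (A ⊔ V, Rbar). Sets in A ⊔ V are predicates on A + V. *)
Definition Psi_fam (adj : rel V) (A : Type) (R : Tfam A) : Tfam (sum A V) :=
  fun X =>
    (exists i : V, ext_eq X (fun z => z = inr i)
                \/ ext_eq X (fun z => z <> inr i))
 \/ (exists G, is_edge adj G /\
        (ext_eq X (fun z => match z with inl _ => False | inr v => G v end)
      \/ ext_eq X (fun z => match z with inl _ => True | inr v => ~ G v end)))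
 \/ (exists Rs, R Rs /\
        (ext_eq X (fun z => match z with inl a => Rs a | inr v => vin v 0 1 2 end)
      \/ ext_eq X (fun z => match z with inl a => ~ Rs a | inr v => vin v 3 4 5 end))).

Definition Psi_map (A B : Type) (f : A -> B) : sum A V -> sum B V :=
  fun z => match z with inl a => inl (f a) | inr v => inr v end.

From mathcomp Require Import all_boot all_fingroup.

Set Implicit Arguments.
Unset Strict Implicit.
Unset Printing Implicit Defensive.

(* Since Psi f is the identity on V, the preimage of each generator of the
   family Psi(B,S) is the generator of Psi(A,R) of the same kind: vertex and
   edge sets (and their complements) are their own preimages, while
   {v1,v2,v3} ∪ S and {v4,v5,v6} ∪ (B \ S) pull back to {v1,v2,v3} ∪ f^-1[S]
   and {v4,v5,v6} ∪ (A \ f^-1[S]), with f^-1[S] in R because f is a morphism. *)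

Lemma ext_eq_trans (X : Type) (P Q W : X -> Prop) :
  ext_eq P Q -> ext_eq Q W -> ext_eq P W.
Proof. by move=> PQ QW z; apply: iff_trans (PQ z) (QW z). Qed.

Lemma ext_eq_comp (X Y : Type) (g : X -> Y) (P Q : Y -> Prop) :
  ext_eq P Q -> ext_eq (fun x => P (g x)) (fun x => Q (g x)).
Proof. by move=> PQ x; apply: PQ. Qed.

Section PsiMapPreimage.

Variables (A B : Type) (f : A -> B).

Lemma Psi_map_eq_inr (z : A + V) (i : V) : Psi_map f z = inr i <-> z = inr i.
Proof. by case: z => [a|v] /=; split=> // -[->]. Qed.

Lemma Psi_map_neq_inr (z : A + V) (i : V) : Psi_map f z <> inr i <-> z <> inr i.
Proof. exact: not_iff_compat (Psi_map_eq_inr z i). Qed.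

Lemma Psi_map_preim_case (P : B -> Prop) (Q : V -> Prop) :
  ext_eq (fun z => match Psi_map f z with inl b => P b | inr v => Q v end)
         (fun z => match z with inl a => P (f a) | inr v => Q v end).
Proof. by case. Qed.

End PsiMapPreimage.

Theorem lemma3p1 (adj : rel V) (Hg : simple_graph adj) (Hr : rigid adj)
  (A B : Type) (R : Tfam A) (S : Tfam B) (f : A -> B) :
  Tmor R S f -> Tmor (Psi_fam adj R) (Psi_fam adj S) (Psi_map f).
Proof.
move=> fS Y [[i [Yi|Yi]]|[[G [HG [YG|YG]]]|[Sy [SSy [YS|YS]]]]].
- left; exists i; left.
  exact: ext_eq_trans (ext_eq_comp _ Yi) (fun z => Psi_map_eq_inr f z i).
- left; exists i; right.
  exact: ext_eq_trans (ext_eq_comp _ Yi) (fun z => Psi_map_neq_inr f z i).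
- right; left; exists G; split=> //; left.
  exact: ext_eq_trans (ext_eq_comp _ YG) (Psi_map_preim_case f _ _).
- right; left; exists G; split=> //; right.
  exact: ext_eq_trans (ext_eq_comp _ YG) (Psi_map_preim_case f _ _).
- right; right; exists (fun a => Sy (f a)); split; first exact: fS; left.
  exact: ext_eq_trans (ext_eq_comp _ YS) (Psi_map_preim_case f _ _).
- right; right; exists (fun a => Sy (f a)); split; first exact: fS; right.
  exact: ext_eq_trans (ext_eq_comp _ YS) (Psi_map_preim_case f _ _).
Qed.
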